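(* Suppose $|\Omega| = |A| = 2$. Then ambiguous communication does not benefit the sender, i.e. $V_{\mathrm{amb}} \le V_{\mathrm{stat}}$.
   Context: Setting: $\Omega$ is a finite set of states, $A$ a finite set of receiver actions. Sender and receiver share a set of priors $P \subseteq \Delta(\Omega)$, nonempty, closed and convex; both have maxmin expected utility preferences. Payoffs are $u_s, u_r : A \times \Omega \to \mathbb{R}$ (arbitrary). A statistical experiment with finite message set $M$ is a map $\sigma: \Omega \to \Delta(M)$, written $\sigma(m\mid\omega)$. A receiver strategy is $\tau: M \to \Delta(A)$, written $\tau(a\mid m)$. For $p \in P$ and $i \in \{s,r\}$, $u_i(p,\sigma,\tau) = \sum_{\omega,m,a} p(\omega)\sigma(m\mid\omega)\tau(a\mid m)u_i(a,\omega)$ and $u_i(\sigma,\tau) = \min_{p\in P} u_i(p,\sigma,\tau)$. An ambiguous experiment is a nonempty closed convex set $\Sigma$ of statistical experiments with a common finite message set $M$; $U_i(\Sigma,\tau) = \min_{\sigma \in \Sigma} u_i(\sigma,\tau)$. Best responses: $BR(\sigma) = \arg\max_{\tau} u_r(\sigma,\tau)$ and $BR(\Sigma) = \arg\max_{\tau} U_r(\Sigma,\tau)$, maximizing over all strategies $\tau: M \to \Delta(A)$. The sender's value with statistical experiments is $V_{\mathrm{stat}} = \sup\{u_s(\sigma,\tau) : M \text{ finite}, \sigma:\Omega\to\Delta(M), \tau \in BR(\sigma)\}$, and with ambiguous experiments is $V_{\mathrm{amb}} = \sup\{U_s(\Sigma,\tau) : M \text{ finite}, \Sigma \text{ ambiguous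 experiment with message set } M, \tau \in BR(\Sigma)\}$ (the sender selects both the experiment and the receiver's best response). Ambiguous communication benefits the sender if $V_{\mathrm{amb}} > V_{\mathrm{stat}}$. *)

From HB Require Import structures.
From mathcomp Require Import all_boot all_order all_algebra.
From mathcomp Require Import all_classical all_reals all_analysis.
Import numFieldNormedType.Exports.
Import Order.TTheory GRing.Theory Num.Theory.

Set Implicit Arguments.
Unset Strict Implicit.
Unset Printing Implicit Defensive.

Local Open Scope classical_set_scope.
Local Open Scope ring_scope.

Definition is_dist {R : realType} {X : finType} (p : X -> R) : Prop :=
  (forall x, 0 <= p x) /\ \sum_(x : X) p x = 1.

Definition is_experiment {R : realType} {Om M : finType} (sigma : Om -> M -> R) : Prop :=
  forall w, is_dist (sigma w).

Definition is_strategy {R : realType} {M A : finType} (tau : M -> A -> R) : Prop :=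
  forall m, is_dist (tau m).

Definition is_prior_set {R : realType} {Om : finType} (P : set (Om -> R)) : Prop :=
  [/\ P !=set0, (forall p, P p -> is_dist p),
      @closed {ptws Om -> R} P &
      (forall p q (t : R), P p -> P q -> 0 <= t <= 1 ->
          P (fun w => t * p w + (1 - t) * q w))].

Definition is_amb_experiment {R : realType} {Om M : finType}
    (Sig : set (Om -> M -> R)) : Prop :=
  [/\ Sig !=set0, (forall s, Sig s -> is_experiment s),
      @closed {ptws Om -> {ptws M -> R}} Sig &
      (forall s s' (t : R), Sig s -> Sig s' -> 0 <= t <= 1 ->
          Sig (fun w m => t * s w m + (1 - t) * s' w m))].

Definition upay {R : realType} {Om M A : finType} (u : A -> Om -> R)
    (p : Om -> R) (sigma : Om -> M -> R) (tau : M -> A -> R) : R :=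
  \sum_(w : Om) \sum_(m : M) \sum_(a : A) p w * sigma w m * tau m a * u a w.

(* u_i(sigma, tau) = min_{p in P} u_i(p, sigma, tau)  (inf = min, P compact) *)
Definition mpay {R : realType} {Om M A : finType} (P : set (Om -> R))
    (u : A -> Om -> R) (sigma : Om -> M -> R) (tau : M -> A -> R) : R :=
  inf [set upay u p sigma tau | p in P].

Definition Upay {R : realType} {Om M A : finType} (P : set (Om -> R))
    (u : A -> Om -> R) (Sig : set (Om -> M -> R)) (tau : M -> A -> R) : R :=
  inf [set mpay P u sigma tau | sigma in Sig].

Definition BR_stat {R : realType} {Om M A : finType} (P : set (Om -> R))
    (ur : A -> Om -> R) (sigma : Om -> M -> R) (tau : M -> A -> R) : Prop :=
  is_strategy tau /\
  forall tau' : M -> A -> R, is_strategy tau' -> mpay P ur sigma tau' <= mpay P ur sigma tau.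

Definition BR_amb {R : realType} {Om M A : finType} (P : set (Om -> R))
    (ur : A -> Om -> R) (Sig : set (Om -> M -> R)) (tau : M -> A -> R) : Prop :=
  is_strategy tau /\
  forall tau' : M -> A -> R, is_strategy tau' -> Upay P ur Sig tau' <= Upay P ur Sig tau.

Definition V_stat {R : realType} {Om A : finType} (P : set (Om -> R))
    (us ur : A -> Om -> R) : \bar R :=
  ereal_sup [set x : \bar R | exists (M : finType) (sigma : Om -> M -> R)
      (tau : M -> A -> R),
      [/\ is_experiment sigma, BR_stat P ur sigma tau &
          x = (mpay P us sigma tau)%:E]].

Definition V_amb {R : realType} {Om A : finType} (P : set (Om -> R))
    (us ur : A -> Om -> R) : \bar R :=
  ereal_sup [set x : \bar R | exists (M : finType) (Sig : set (Om -> M -> R))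
      (tau : M -> A -> R),
      [/\ is_amb_experiment Sig, BR_amb P ur Sig tau &
          x = (Upay P us Sig tau)%:E]].

From HB Require Import structures.
From mathcomp Require Import all_boot all_order all_algebra.
From mathcomp Require Import all_classical all_reals all_analysis.
From mathcomp Require Import ring lra.
Import numFieldNormedType.Exports.
Import Order.TTheory GRing.Theory Num.Theory.

Set Implicit Arguments.
Unset Strict Implicit.
Unset Printing Implicit Defensive.

Local Open Scope classical_set_scope.
Local Open Scope ring_scope.

(* With two states and two actions, a receiver strategy matters only through z,
   the probability of a1 in each state, and payoffs are affine both in z and in
   the prior probability of w1; hence maxmin payoffs are minima over the two
   extreme priors pl, ph of P.  Let t be a best response to an ambiguous
   experiment Sig.  Mixing t with a constant strategy is not a profitable
   deviation; by a perturbation argument when only one extreme prior binds at the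
   receiver's worst case, and by 2x2 minimax together with the convexity of Sig
   when both bind, this yields some s in Sig and a mixture nu of pl and ph that is
   a worst-case prior at z_s and under which z_s beats both constant strategies.
   The statistical experiment recommending a1 with probability z_s(w) then makes
   obedience a best response, and gives the sender at least U_s(Sig, t). *)

Lemma card2_pair (T : finType) : #|T| = 2%N ->
  exists x y : T, x != y /\ forall z, z = x \/ z = y.
Proof.
rewrite cardE => cardT; have := enum_uniq T.
case E: (enum T) cardT => [|x [|y [|]]] //= _; rewrite inE andbT => xy.
exists x, y; split => // z; have : z \in enum T by rewrite mem_enum.
by rewrite E !inE => /orP[/eqP->|/eqP->]; [left|right].
Qed.

Lemma sum_pair (T : finType) (V : nmodType) (x y : T) : x != y ->
  (forall z, z = x \/ z = y) -> forall f : T -> V, \sum_t f t = f x + f y.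
Proof.
move=> xy T2 f; rewrite (bigD1 x) //= (bigD1 y) 1?eq_sym //= big1 ?addr0 //.
by move=> z /andP[zx zy]; case: (T2 z) => ez; rewrite ez eqxx in zx zy.
Qed.

Lemma inf_eq_min (R : realType) (E : set R) (c : R) :
  E c -> (forall x, E x -> c <= x) -> inf E = c.
Proof.
move=> Ec lbc; apply/le_anti/andP; split; first by apply: ge_inf => //; exists c.
by apply: lb_le_inf => //; exists c.
Qed.

Lemma dist_itv01 (R : realType) (X : finType) (p : X -> R) x :
  is_dist p -> 0 <= p x <= 1.
Proof.
move=> [p0 <-]; rewrite p0 (bigD1 x) //= lerDl; exact: sumr_ge0.
Qed.

Lemma exists_convex_root (R : realFieldType) (d1 d2 : R) : d1 <= 0 <= d2 ->
  exists2 l : R, 0 <= l <= 1 & l * d1 + (1 - l) * d2 = 0.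
Proof.
move=> /andP[d1le d2ge]; have [d12|d12] := eqVneq (d2 - d1) 0.
  by exists 1; rewrite ?ler01 ?lexx //; lra.
have dpos : 0 < d2 - d1 by rewrite lt_neqAle eq_sym d12 /=; lra.
exists (d2 / (d2 - d1)); last by field.
by rewrite divr_ge0 ?ler_pdivrMr //=; lra.
Qed.

Lemma exists_small_weight (R : realFieldType) (D X : R) : 0 < D ->
  exists2 e : R, 0 < e <= 1 & - D < e * X.
Proof.
move=> D0; have [X0|X0] := leP 0 X.
  by exists 1; rewrite ?ltr01 ?lexx // mul1r; lra.
have DX : 0 < D - X by lra.
exists (D / (D - X)); first by rewrite divr_gt0 ?ler_pdivrMr //=; lra.
by rewrite mulrAC ltr_pdivlMr //; nra.
Qed.

Lemma minimax_2x2_crossing (R : realFieldType) (a0 a1 b0 b1 v : R) :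
  (forall th : R, 0 <= th <= 1 ->
     Num.min ((1 - th) * a0 + th * a1) ((1 - th) * b0 + th * b1) <= v) ->
  a0 <= v < b0 -> b1 <= v < a1 ->
  exists2 nu : R, 0 <= nu <= 1 &
    nu * a0 + (1 - nu) * b0 <= v /\ nu * a1 + (1 - nu) * b1 <= v.
Proof.
move=> H /andP[ha0 hb0] /andP[hb1 ha1].
set S := b0 - a0 + (a1 - b1); have S0 : 0 < S by rewrite /S; lra.
have Sn : S != 0 by rewrite gt_eqF.
(* th equalises the two lines; nu makes both mixtures take that common value *)
set th := (b0 - a0) / S; set nu := (b0 - b1) / S.
have th01 : 0 <= th <= 1 by rewrite divr_ge0 ?ler_pdivrMr /S //=; lra.
have nu01 : 0 <= nu <= 1 by rewrite divr_ge0 ?ler_pdivrMr /S //=; lra.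
have eq_lines : (1 - th) * a0 + th * a1 = (1 - th) * b0 + th * b1.
  by rewrite /th /S; field.
have := H th th01; rewrite -eq_lines minxx => hv.
exists nu => //; split.
- by have -> : nu * a0 + (1 - nu) * b0 = (1 - th) * a0 + th * a1
    by rewrite /nu /th /S; field.
- by have -> : nu * a1 + (1 - nu) * b1 = (1 - th) * a0 + th * a1
    by rewrite /nu /th /S; field.
Qed.

Lemma minimax_2x2 (R : realFieldType) (a0 a1 b0 b1 v : R) :
  (forall th : R, 0 <= th <= 1 ->
     Num.min ((1 - th) * a0 + th * a1) ((1 - th) * b0 + th * b1) <= v) ->
  exists2 nu : R, 0 <= nu <= 1 &
    nu * a0 + (1 - nu) * b0 <= v /\ nu * a1 + (1 - nu) * b1 <= v.
Proof.
move=> H.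
have h0 : Num.min a0 b0 <= v.
  by move: (H 0); rewrite lexx ler01 subr0 !mul1r !mul0r !addr0; apply.
have h1 : Num.min a1 b1 <= v.
  by move: (H 1); rewrite lexx ler01 subrr !mul1r !mul0r !add0r; apply.
have [|na] := boolP ((a0 <= v) && (a1 <= v)).
  by move=> /andP[? ?]; exists 1; rewrite ?ler01 ?lexx //; split; lra.
have [|nb] := boolP ((b0 <= v) && (b1 <= v)).
  by move=> /andP[? ?]; exists 0; rewrite ?ler01 ?lexx //; split; lra.
move: na nb h0 h1; rewrite !ge_min => + + /orP[ha0|hb0] /orP[ha1|hb1];
  rewrite ?ha0 ?ha1 ?hb0 ?hb1 ?andbT //= -!ltNge => hv hv'.
- by apply: minimax_2x2_crossing; rewrite ?ha0 ?hb1.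
- have [nu nu01 [e0 e1]] : exists2 nu : R, 0 <= nu <= 1 &
      nu * b0 + (1 - nu) * a0 <= v /\ nu * b1 + (1 - nu) * a1 <= v.
    by apply: minimax_2x2_crossing; rewrite ?hb0 ?ha1 // => th /H; rewrite minC.
  by exists (1 - nu); [lra | split; lra].
Qed.

Section PointwiseTopology.
Import ArrowAsProduct.
Variable R : realType.

Lemma ptws_cube_compact (X : finType) :
  compact [set f : {ptws X -> R} | forall x, `[0, 1]%classic (f x)].
Proof. exact: (tychonoff (fun _ => @segment_compact R 0 1)). Qed.

Lemma closed_dists_compact (X : finType) (S : set {ptws X -> R}) :
  closed S -> (forall p, S p -> is_dist p) -> compact S.
Proof.
move=> Sc Sd; apply: (subclosed_compact Sc (@ptws_cube_compact X)).
by move=> p /Sd dp x /=; rewrite in_itv; apply: dist_itv01.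
Qed.

Lemma closed_experiments_compact (X Y : finType)
    (S : set {ptws X -> {ptws Y -> R}}) :
  closed S -> (forall s, S s -> is_experiment s) -> compact S.
Proof.
move=> Sc Se.
apply: (subclosed_compact Sc (tychonoff (fun _ => @ptws_cube_compact Y))).
by move=> s /Se es x y /=; rewrite in_itv; apply: dist_itv01.
Qed.

Lemma ptws_eval2_continuous (X Y : finType) (x : X) (y : Y) :
  continuous (fun f : {ptws X -> {ptws Y -> R}} => f x y).
Proof.
move=> f; apply: (@continuous_comp _ _ _ (fun f : {ptws X -> {ptws Y -> R}} => f x)
  (fun g : {ptws Y -> R} => g y)); exact: proj_continuous.
Qed.

Lemma continuous_sum (T : topologicalType) (I : finType) (F : I -> T -> R) :
  (forall i, continuous (F i)) -> continuous (fun t => \sum_i F i t).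
Proof.
move=> Fc t; rewrite -fct_sumE.
by elim/big_ind: _ => [|f g cf cg|i _];
  [exact: cst_continuous | exact: continuousD | exact: Fc].
Qed.

Lemma continuous_mull (T : topologicalType) (c : R) (F : T -> R) :
  continuous F -> continuous (fun x => c * F x).
Proof.
move=> Fc x; apply: (@continuousM R T (cst c) F x); last exact: Fc.
exact: cst_continuous.
Qed.

Lemma continuous_mulr (T : topologicalType) (c : R) (F : T -> R) :
  continuous F -> continuous (fun x => F x * c).
Proof.
move=> Fc x; apply: (@continuousM R T F (cst c) x); first exact: Fc.
exact: cst_continuous.
Qed.

Lemma continuous_addl (T : topologicalType) (c : R) (F : T -> R) :
  continuous F -> continuous (fun x => c + F x).
Proof.
move=> Fc x; apply: (@continuousD R R^o T (cst c) F x); last exact: Fc.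
exact: cst_continuous.
Qed.

Lemma prior_extremes (X : finType) (P : set (X -> R)) (x : X) : is_prior_set P ->
  exists pl ph, [/\ P pl, P ph, (forall p, P p -> pl x <= p x)
                   & (forall p, P p -> p x <= ph x)].
Proof.
case=> P0 Pd Pc _; have Pcpt := closed_dists_compact Pc Pd.
have P0' : (P : set {ptws X -> R}) !=set0 := P0.
have evalc := continuous_subspaceT (A := (P : set {ptws X -> R}))
  (@proj_continuous X (fun=> R) x).
have [pl Ppl plmin] := compact_EVT_min P0' Pcpt evalc.
have [ph Pph phmax] := compact_EVT_max P0' Pcpt evalc.
move: Ppl Pph; rewrite !inE => Ppl Pph; exists pl, ph; split => // p Pp.
  by apply: plmin; rewrite inE.
by apply: phmax; rewrite inE.
Qed.

End PointwiseTopology.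

Section TwoStatesTwoActions.
Variables (R : realType) (Om A : finType) (P : set (Om -> R)).
Variables (w0 w1 : Om) (a0 a1 : A).
Hypotheses (w01 : w0 != w1) (Om2 : forall w, w = w0 \/ w = w1).
Hypotheses (a01 : a0 != a1) (A2 : forall a, a = a0 \/ a = a1).
Hypothesis HP : is_prior_set P.
Variables (pl ph : Om -> R).
Hypotheses (Ppl : P pl) (Pph : P ph).
Hypotheses (pl_min : forall p, P p -> pl w1 <= p w1)
  (ph_max : forall p, P p -> p w1 <= ph w1).

Definition prob_a1 (M : finType) (s : Om -> M -> R) (t : M -> A -> R) (w : Om) : R :=
  \sum_m s w m * t m a1.

Definition pay (u : A -> Om -> R) (p z : Om -> R) : R :=
  \sum_w p w * (u a0 w + z w * (u a1 w - u a0 w)).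

Definition minpay (u : A -> Om -> R) (z : Om -> R) : R :=
  Num.min (pay u pl z) (pay u ph z).

Definition mixpay (nu : R) (u : A -> Om -> R) (z : Om -> R) : R :=
  nu * pay u pl z + (1 - nu) * pay u ph z.

Lemma strategy_a0 (M : finType) (t : M -> A -> R) m :
  is_strategy t -> t m a0 = 1 - t m a1.
Proof. by move=> /(_ m)[_]; rewrite (sum_pair a01 A2) => <-; rewrite addrK. Qed.

Lemma prob_a1_itv01 (M : finType) (s : Om -> M -> R) (t : M -> A -> R) w :
  is_experiment s -> is_strategy t -> 0 <= prob_a1 s t w <= 1.
Proof.
move=> es et; have [s0 s1] := es w.
have t01 m : 0 <= t m a1 <= 1 by apply: dist_itv01.
rewrite /prob_a1 sumr_ge0 => [/=|m _]; last by rewrite mulr_ge0 //; case/andP: (t01 m).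
by rewrite -s1 ler_sum // => m _; rewrite ler_piMr //; case/andP: (t01 m).
Qed.

Lemma prob_a1_mix (M : finType) (l : R) (s1 s2 : Om -> M -> R) (t : M -> A -> R) :
  prob_a1 (fun w m => l * s1 w m + (1 - l) * s2 w m) t
  = fun w => l * prob_a1 s1 t w + (1 - l) * prob_a1 s2 t w.
Proof.
apply: funext => w; rewrite /prob_a1 !mulr_sumr -big_split /=.
by apply: eq_bigr => m _; ring.
Qed.

Lemma upayE (M : finType) u p (s : Om -> M -> R) (t : M -> A -> R) :
  is_experiment s -> is_strategy t -> upay u p s t = pay u p (prob_a1 s t).
Proof.
move=> es et; rewrite /upay /pay; apply: eq_bigr => w _.
transitivity (\sum_m p w * (s w m * u a0 w + s w m * t m a1 * (u a1 w - u a0 w))).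
  by apply: eq_bigr => m _; rewrite (sum_pair a01 A2) (strategy_a0 m et); ring.
by rewrite -mulr_sumr big_split /= -!mulr_suml; case: (es w) => _ ->; rewrite mul1r.
Qed.

Lemma pay_affine u p z (a b : R) :
  pay u p (fun w => a + b * z w)
  = (1 - a - b) * pay u p (cst 0) + a * pay u p (cst 1) + b * pay u p z.
Proof. by rewrite /pay !(sum_pair w01 Om2) /=; ring. Qed.

Lemma pay_cst u p (a : R) :
  pay u p (cst a) = (1 - a) * pay u p (cst 0) + a * pay u p (cst 1).
Proof. by rewrite /pay !(sum_pair w01 Om2) /=; ring. Qed.

Lemma pay_mix u p z1 z2 (l : R) :
  pay u p (fun w => l * z1 w + (1 - l) * z2 w) = l * pay u p z1 + (1 - l) * pay u p z2.
Proof. by rewrite /pay !(sum_pair w01 Om2); ring. Qed.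

Lemma mixpay_affine nu u z (a b : R) :
  mixpay nu u (fun w => a + b * z w)
  = (1 - a - b) * mixpay nu u (cst 0) + a * mixpay nu u (cst 1) + b * mixpay nu u z.
Proof. by rewrite /mixpay !pay_affine; ring. Qed.

Lemma minpay_le_pay u p z : P p -> minpay u z <= pay u p z.
Proof.
move=> Pp; pose c w := u a0 w + z w * (u a1 w - u a0 w).
have payE q : P q -> pay u q z = c w0 + q w1 * (c w1 - c w0).
  case: HP => _ Pd _ _ /Pd[_]; rewrite /pay /c !(sum_pair w01 Om2) => q1.
  have -> : q w0 = 1 - q w1 by rewrite -q1 addrK.
  by ring.
rewrite /minpay !payE // ge_min.
have [c01|c01] := leP 0 (c w1 - c w0); apply/orP; [left|right]; rewrite lerD2l.
  by rewrite ler_wpM2r ?pl_min.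
by rewrite ler_wnM2r ?ph_max // ltW.
Qed.

Lemma mpayE (M : finType) u (s : Om -> M -> R) (t : M -> A -> R) :
  is_experiment s -> is_strategy t -> mpay P u s t = minpay u (prob_a1 s t).
Proof.
move=> es et; apply: inf_eq_min => [|_ [p Pp <-]]; last by rewrite upayE // minpay_le_pay.
rewrite /minpay; case: (leP (pay u pl _) (pay u ph _)) => _.
  by exists pl => //; rewrite upayE.
by exists ph => //; rewrite upayE.
Qed.

Lemma minpay_le_mixpay nu u z : 0 <= nu <= 1 -> minpay u z <= mixpay nu u z.
Proof.
move=> /andP[nu0 nu1].
have [hl hh] : minpay u z <= pay u pl z /\ minpay u z <= pay u ph z.
  by rewrite /minpay !ge_min !lexx orbT.
rewrite /mixpay; nra.
Qed.

Definition strat_of (M : finType) (f : M -> R) : M -> A -> R :=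
  fun m a => if a == a1 then f m else 1 - f m.

Lemma strat_of_strategy (M : finType) (f : M -> R) :
  (forall m, 0 <= f m <= 1) -> is_strategy (strat_of f).
Proof.
move=> f01 m; have /andP[f0 f1] := f01 m; split.
  by move=> a; rewrite /strat_of; case: (a == a1); lra.
by rewrite (sum_pair a01 A2) /strat_of eqxx (negbTE a01) subrK.
Qed.

Definition recommend (z : Om -> R) : Om -> bool -> R :=
  fun w b => if b then z w else 1 - z w.

Definition obey : bool -> A -> R := strat_of (fun b : bool => b%:R).

Lemma recommend_experiment z :
  (forall w, 0 <= z w <= 1) -> is_experiment (recommend z).
Proof.
move=> z01 w; have /andP[z0 z1] := z01 w.
by split; [case; rewrite /recommend; lra | rewrite big_bool /recommend /=; lra].
Qed.

Lemma obey_strategy : is_strategy obey.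
Proof. by apply: strat_of_strategy; case; rewrite /= ?ler01 ?lexx. Qed.

Lemma prob_a1_recommend z (t : bool -> A -> R) :
  prob_a1 (recommend z) t = fun w => t false a1 + (t true a1 - t false a1) * z w.
Proof. by apply: funext => w; rewrite /prob_a1 big_bool /recommend /=; ring. Qed.

Lemma prob_a1_obey z : prob_a1 (recommend z) obey = z.
Proof.
by rewrite prob_a1_recommend /obey /strat_of eqxx; apply: funext => w /=; ring.
Qed.

Definition obedient (nu : R) (u : A -> Om -> R) (z : Om -> R) : Prop :=
  [/\ mixpay nu u z = minpay u z, mixpay nu u (cst 0) <= mixpay nu u z
    & mixpay nu u (cst 1) <= mixpay nu u z].

(* A response to the recommendation yields a + b * z, whose payoff is an affine
   combination of those of cst 0, cst 1 and z with nonnegative weights on the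
   constants; under the prior nu these are no better than z. *)
Lemma obey_BR ur z nu : (forall w, 0 <= z w <= 1) -> 0 <= nu <= 1 ->
  obedient nu ur z -> BR_stat P ur (recommend z) obey.
Proof.
move=> z01 nu01 [mixE mix0 mix1].
have ez := recommend_experiment z01; have eo := obey_strategy.
split=> // t' et'; rewrite !mpayE // prob_a1_obey prob_a1_recommend -mixE.
apply: le_trans (minpay_le_mixpay _ _ nu01) _; rewrite mixpay_affine.
have /andP[f0 _] : 0 <= t' false a1 <= 1 by apply: dist_itv01.
have /andP[_ t1] : 0 <= t' true a1 <= 1 by apply: dist_itv01.
have c0 : 0 <= 1 - t' false a1 - (t' true a1 - t' false a1) by lra.
have := ler_wpM2l c0 mix0; have := ler_wpM2l f0 mix1; lra.
Qed.

Section AmbiguousBestResponse.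
Variables (M : finType) (Sig : set (Om -> M -> R)) (ur : A -> Om -> R).
Variable t : M -> A -> R.
Hypotheses (HSig : is_amb_experiment Sig) (Ht : BR_amb P ur Sig t).

Lemma Sig_experiment s : Sig s -> is_experiment s.
Proof. by case: HSig => _ + _ _; apply. Qed.

Lemma t_strategy : is_strategy t.
Proof. by case: Ht. Qed.

Lemma mpay_Sig u s : Sig s -> mpay P u s t = minpay u (prob_a1 s t).
Proof. by move=> /Sig_experiment es; rewrite mpayE //; exact: t_strategy. Qed.

Lemma continuous_pay_prob_a1 u p :
  continuous (fun s : {ptws Om -> {ptws M -> R}} => pay u p (prob_a1 s t)).
Proof.
apply: continuous_sum => w; apply/continuous_mull/continuous_addl/continuous_mulr.
apply: continuous_sum => m; apply: continuous_mulr.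
exact: ptws_eval2_continuous.
Qed.

Lemma pay_argmin u p : exists2 s, Sig s &
  forall s', Sig s' -> pay u p (prob_a1 s t) <= pay u p (prob_a1 s' t).
Proof.
case: HSig => Sig0 Se Sc _.
have [s Ss smin] := compact_EVT_min
  (Sig0 : (Sig : set {ptws Om -> {ptws M -> R}}) !=set0)
  (closed_experiments_compact Sc Se)
  (continuous_subspaceT (@continuous_pay_prob_a1 u p)).
by exists s => [|s' Ss']; [rewrite inE in Ss | apply: smin; rewrite inE].
Qed.

Section Extremes.
Variables (u : A -> Om -> R) (s1 s2 : Om -> M -> R).
Hypotheses (S1 : Sig s1) (S2 : Sig s2).
Hypothesis min1 : forall s, Sig s -> pay u pl (prob_a1 s1 t) <= pay u pl (prob_a1 s t).
Hypothesis min2 : forall s, Sig s -> pay u ph (prob_a1 s2 t) <= pay u ph (prob_a1 s t).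

Lemma minpay_ge_extremes s : Sig s ->
  Num.min (pay u pl (prob_a1 s1 t)) (pay u ph (prob_a1 s2 t)) <= mpay P u s t.
Proof.
by move=> Ss; rewrite mpay_Sig // /minpay le_min !ge_min min1 ?min2 ?orbT.
Qed.

Lemma Upay_extremes :
  Upay P u Sig t = Num.min (pay u pl (prob_a1 s1 t)) (pay u ph (prob_a1 s2 t)).
Proof.
apply: inf_eq_min => [|_ [s Ss <-]]; last exact: minpay_ge_extremes.
rewrite /minpay; case: leP => h.
  exists s1; rewrite // mpay_Sig //; apply/min_idPl.
  exact: le_trans h (min2 S1).
exists s2; rewrite // mpay_Sig //; apply/min_idPr.
exact: le_trans (ltW h) (min1 S2).
Qed.

End Extremes.

Lemma Upay_lbound u : has_lbound [set mpay P u s t | s in Sig].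
Proof.
have [s1 _ min1] := pay_argmin u pl; have [s2 _ min2] := pay_argmin u ph.
by eexists => _ [s Ss <-]; apply: (minpay_ge_extremes min1 min2).
Qed.

(* The deviation plays a1 with probability e * c + (1 - e) * t m a1. *)
Lemma Upay_ge_deviation e c x : 0 <= e <= 1 -> 0 <= c <= 1 ->
  (forall s, Sig s -> x <= minpay ur (fun w => e * c + (1 - e) * prob_a1 s t w)) ->
  x <= Upay P ur Sig t.
Proof.
move=> /andP[e0 e1] /andP[c0 c1] xle.
pose f m := e * c + (1 - e) * t m a1.
have f01 m : 0 <= f m <= 1.
  have /andP[t0 t1] : 0 <= t m a1 <= 1 by apply: dist_itv01; exact: t_strategy.
  by apply/andP; split; rewrite /f; nra.
apply: le_trans (proj2 Ht _ (strat_of_strategy f01)).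
apply: lb_le_inf => [|_ [s Ss <-]].
  by case: HSig => -[s Ss] _ _ _; exists (mpay P ur s (strat_of f)), s.
rewrite mpayE; last exact: strat_of_strategy; last exact: Sig_experiment.
suff -> : prob_a1 s (strat_of f) = fun w => e * c + (1 - e) * prob_a1 s t w.
  exact: xle.
apply: funext => w; have [_ s1] := Sig_experiment Ss w.
rewrite /prob_a1 /strat_of eqxx /f.
have -> : \sum_m s w m * (e * c + (1 - e) * t m a1)
        = e * c * \sum_m s w m + (1 - e) * \sum_m s w m * t m a1.
  by rewrite !mulr_sumr -big_split; apply: eq_bigr => m _ /=; ring.
by rewrite s1 mulr1.
Qed.

Lemma Upay_ge_cst th : 0 <= th <= 1 -> minpay ur (cst th) <= Upay P ur Sig t.
Proof.
move=> th01; apply: (@Upay_ge_deviation 1 th) => // [|s _]; first by rewrite ler01 lexx.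
by rewrite subrr mul1r; under eq_fun do rewrite mul0r addr0.
Qed.

(* If only the prior p binds at the receiver's worst case, a small move towards
   any constant strategy would otherwise be a profitable deviation. *)
Lemma pay_cst_le_min p p' (m m' c : R) :
  (forall z, minpay ur z = Num.min (pay ur p z) (pay ur p' z)) ->
  (forall s, Sig s -> m <= pay ur p (prob_a1 s t)) ->
  (forall s, Sig s -> m' <= pay ur p' (prob_a1 s t)) ->
  m < m' -> Upay P ur Sig t <= m -> 0 <= c <= 1 -> pay ur p (cst c) <= m.
Proof.
move=> minpayE mle m'le mm' Ule c01; rewrite leNgt; apply/negP => mc.
have [e /andP[e0 e1] small] :=
  exists_small_weight (pay ur p' (cst c) - m') (ltac:(lra) : 0 < m' - m).
pose x := Num.min (e * pay ur p (cst c) + (1 - e) * m)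
                  (e * pay ur p' (cst c) + (1 - e) * m').
have x_le : x <= Upay P ur Sig t.
  apply: (@Upay_ge_deviation e c) => // [|s Ss]; first by rewrite ltW.
  have hm := mle s Ss; have hm' := m'le s Ss.
  rewrite minpayE !(pay_mix _ _ (cst c)) le_min !ge_min.
  by apply/andP; split; apply/orP; [left|right]; nra.
have : m < x by rewrite lt_min; apply/andP; split; nra.
lra.
Qed.

Lemma exists_balanced s1 s2 : Sig s1 -> Sig s2 ->
  pay ur pl (prob_a1 s1 t) <= pay ur ph (prob_a1 s1 t) ->
  pay ur ph (prob_a1 s2 t) <= pay ur pl (prob_a1 s2 t) ->
  exists2 s, Sig s & pay ur pl (prob_a1 s t) = pay ur ph (prob_a1 s t).
Proof.
move=> S1 S2 le1 le2.
have [|l l01 root] := @exists_convex_root _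
  (pay ur pl (prob_a1 s1 t) - pay ur ph (prob_a1 s1 t))
  (pay ur pl (prob_a1 s2 t) - pay ur ph (prob_a1 s2 t)); first by apply/andP; lra.
exists (fun w m => l * s1 w m + (1 - l) * s2 w m).
  by case: HSig => _ _ _; apply.
by rewrite prob_a1_mix !pay_mix; lra.
Qed.

Lemma exists_obedient :
  exists2 s, Sig s & exists2 nu, 0 <= nu <= 1 & obedient nu ur (prob_a1 s t).
Proof.
have [s1 S1 min1] := pay_argmin ur pl; have [s2 S2 min2] := pay_argmin ur ph.
have Umin := Upay_extremes S1 S2 min1 min2.
set m1 := pay ur pl (prob_a1 s1 t) in min1 Umin.
set m2 := pay ur ph (prob_a1 s2 t) in min2 Umin.
have [lt12|lt21|eq12] := ltgtP m1 m2.
- have cst_le c : 0 <= c <= 1 -> pay ur pl (cst c) <= m1.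
    by apply: (pay_cst_le_min (p' := ph) (m' := m2)); rewrite // Umin ge_min lexx.
  have minE : minpay ur (prob_a1 s1 t) = m1.
    by apply/min_idPl; apply: le_trans (ltW lt12) (min2 _ S1).
  exists s1 => //; exists 1; rewrite ?ler01 ?lexx //.
  by rewrite /obedient /mixpay subrr !mul0r !addr0 !mul1r minE !cst_le ?ler01 ?lexx.
- have cst_le c : 0 <= c <= 1 -> pay ur ph (cst c) <= m2.
    apply: (pay_cst_le_min (p' := pl) (m' := m1));
      rewrite // ?Umin ?ge_min ?lexx ?orbT //.
    by move=> z; rewrite /minpay minC.
  have minE : minpay ur (prob_a1 s2 t) = m2.
    by apply/min_idPr; apply: le_trans (ltW lt21) (min1 _ S2).
  exists s2 => //; exists 0; rewrite ?ler01 ?lexx //.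
  by rewrite /obedient /mixpay subr0 !mul0r !add0r !mul1r minE !cst_le ?ler01 ?lexx.
- have [nu nu01 [mix0 mix1]] : exists2 nu : R, 0 <= nu <= 1 &
      mixpay nu ur (cst 0) <= m1 /\ mixpay nu ur (cst 1) <= m1.
    apply: minimax_2x2 => th /Upay_ge_cst.
    by rewrite Umin -eq12 minxx /minpay !(pay_cst _ _ th).
  have le1 : m1 <= pay ur ph (prob_a1 s1 t) by rewrite eq12; exact: min2.
  have le2 : m2 <= pay ur pl (prob_a1 s2 t) by rewrite -eq12; exact: min1.
  have [s Ss bal] := exists_balanced S1 S2 le1 le2.
  have mixE : mixpay nu ur (prob_a1 s t) = pay ur pl (prob_a1 s t).
    by rewrite /mixpay -bal; ring.
  have := min1 _ Ss; exists s => //; exists nu => //.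
  by rewrite /obedient mixE /minpay -bal minxx; split; lra.
Qed.

Lemma recommend_dominates us : exists (sD : Om -> bool -> R) (tD : bool -> A -> R),
  [/\ is_experiment sD, BR_stat P ur sD tD & Upay P us Sig t <= mpay P us sD tD].
Proof.
have [s Ss [nu nu01 obed]] := exists_obedient.
have z01 w : 0 <= prob_a1 s t w <= 1.
  by apply: prob_a1_itv01; [exact: Sig_experiment | exact: t_strategy].
have ez := recommend_experiment z01; have eo := obey_strategy.
exists (recommend (prob_a1 s t)), obey; split => //; first exact: obey_BR obed.
rewrite mpayE // prob_a1_obey -mpay_Sig //.
by apply: ge_inf; [exact: Upay_lbound | exists s].
Qed.

End AmbiguousBestResponse.

End TwoStatesTwoActions.

Theorem theorem1 (R : realType) (Om A : finType) (P : set (Om -> R))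
    (us ur : A -> Om -> R) :
  #|Om| = 2%N -> #|A| = 2%N -> is_prior_set P ->
  (V_amb P us ur <= V_stat P us ur)%E.
Proof.
move=> cardOm cardA HP.
have [w0 [w1 [w01 Om2]]] := card2_pair cardOm.
have [a0 [a1 [a01 A2]]] := card2_pair cardA.
have [pl [ph [Ppl Pph pl_min ph_max]]] := prior_extremes w1 HP.
apply: ge_ereal_sup => _ [M [Sig [t [HSig Ht ->]]]].
have [sD [tD [esD brD le_sD]]] :=
  recommend_dominates w01 Om2 a01 A2 HP Ppl Pph pl_min ph_max HSig Ht us.
apply: (le_trans (y := (mpay P us sD tD)%:E)); first by rewrite lee_fin.
by apply: ereal_sup_ubound; exists bool, sD, tD.
Qed.
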